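(* Let $X$ be a non-empty set, $A$ a non-empty subset of $X$, and $f,g\in\mathcal T_X(A)$. Then in the semigroup $\mathcal T_X(A)$: (i) $f\,\mathscr L\,g$ iff $f=g$, or $\operatorname{im}(f)=\operatorname{im}(g)$ and $A$ saturates both $\ker(f)$ and $\ker(g)$; (ii) $f\,\mathscr R\,g$ iff $\ker(f)=\ker(g)$; (iii) $f\,\mathscr H\,g$ iff $f=g$, or $\operatorname{im}(f)=\operatorname{im}(g)$ and $A$ saturates $\ker(f)=\ker(g)$; (iv) $f\,\mathscr D\,g$ iff $\ker(f)=\ker(g)$, or $\operatorname{rank}(f)=\operatorname{rank}(g)$ and $A$ saturates both $\ker(f)$ and $\ker(g)$; (v) $f\,\mathscr J\,g$ iff $\ker(f)=\ker(g)$ or $|Af|=\operatorname{rank}(f)=\operatorname{rank}(g)=|Ag|$. Further, $\mathscr D=\mathscr J$ in $\mathcal T_X(A)$ if and only if $A$ is finite or $A=X$.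
   Context: $\mathcal T_X$ is the semigroup of all maps $X\to X$ (maps written on the right, composed left to right). $\mathcal T_X(A)=\{f\in\mathcal T_X:\operatorname{im}(f)\subseteq A\}$. $\ker(f)=\{(x,y):xf=yf\}$, $\operatorname{rank}(f)=|\operatorname{im}(f)|$, $Af=\{xf:x\in A\}$. A set $B$ saturates an equivalence $\sigma$ if every $\sigma$-class contains an element of $B$. Green's relations are computed within the semigroup $\mathcal T_X(A)$ ($x\,\mathscr L\,y$ iff $T^1x=T^1y$, etc., with $T=\mathcal T_X(A)$). *)

From Stdlib Require Import List.

Section Defs.
Context {X : Type}.

Definition inT (A : X -> Prop) (f : X -> X) : Prop := forall x, A (f x).

(* maps written on the right, composed left to right: x(fg) = (xf)g *)
Definition mul (f g : X -> X) : X -> X := fun x => g (f x).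

(* Principal one-sided / two-sided ideals in T = T_X(A), via T^1 *)
(* T^1 f ⊆ T^1 g  iff  f ∈ T^1 g *)
Definition leL (A : X -> Prop) (f g : X -> X) : Prop :=
  f = g \/ exists h, inT A h /\ f = mul h g.
Definition leR (A : X -> Prop) (f g : X -> X) : Prop :=
  f = g \/ exists h, inT A h /\ f = mul g h.
Definition leJ (A : X -> Prop) (f g : X -> X) : Prop :=
  f = g \/ (exists h, inT A h /\ f = mul h g)
        \/ (exists h, inT A h /\ f = mul g h)
        \/ (exists h k, inT A h /\ inT A k /\ f = mul (mul h g) k).

Definition GreenL A f g := leL A f g /\ leL A g f.
Definition GreenR A f g := leR A f g /\ leR A g f.
Definition GreenH A f g := GreenL A f g /\ GreenR A f g.
Definition GreenD A f g := exists h, inT A h /\ GreenL A f h /\ GreenR A h g.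
Definition GreenJ A f g := leJ A f g /\ leJ A g f.

Definition im (f : X -> X) : X -> Prop := fun y => exists x, y = f x.
Definition imA (A : X -> Prop) (f : X -> X) : X -> Prop :=
  fun y => exists x, A x /\ y = f x.

Definition same_set (P Q : X -> Prop) : Prop := forall y, P y <-> Q y.
Definition same_ker (f g : X -> X) : Prop :=
  forall x y, f x = f y <-> g x = g y.

Definition saturates (A : X -> Prop) (f : X -> X) : Prop :=
  forall x, exists a, A a /\ f a = f x.

Definition equipotent (P Q : X -> Prop) : Prop :=
  exists (u : {x | P x} -> {y | Q y}) (v : {y | Q y} -> {x | P x}),
    (forall p, v (u p) = p) /\ (forall q, u (v q) = q).

Definition finite_set (A : X -> Prop) : Prop :=
  exists l : list X, forall x, A x -> In x l.

End Defs.

From Stdlib Require Import List Arith Lia Classical ClassicalEpsilon FunctionalExtensionality.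

(* Right multiplication by an element of T_X(A) can only coarsen the kernel, and left
   multiplication can only shrink the image to a subset of Ag; choosing preimages shows that
   these conditions are also sufficient, which gives L, R and H, and D = L o R.  For J,
   f lies in T^1 g T^1 iff ker g is contained in ker f or |im f| <= |Ag|, and
   Schroeder-Bernstein turns the two mutual inequalities into |Af| = |im f| = |im g| = |Ag|.
   If A is finite or A = X, then |Af| = |im f| forces A to saturate ker f, so D = J; otherwise
   an injective sequence in A and a point outside A yield a J-related pair that is not
   D-related. *)

Section Cardinality.
Context {X : Type}.

(* Some x in B with f x = y when there is one; otherwise an unspecified element. *)
Definition preim (B : X -> Prop) (f : X -> X) (y : X) : X :=
  epsilon (inhabits y) (fun x => B x /\ f x = y).

Lemma preim_spec (B : X -> Prop) (f : X -> X) (y : X) :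
  (exists x, B x /\ f x = y) -> B (preim B f y) /\ f (preim B f y) = y.
Proof. exact (epsilon_spec (inhabits y) (fun x => B x /\ f x = y)). Qed.

Lemma preim_true (f : X -> X) (x : X) : f (preim (fun _ => True) f (f x)) = f x.
Proof. apply preim_spec; eauto. Qed.

Definition le_card (P Q : X -> Prop) : Prop :=
  exists u : X -> X, (forall x, P x -> Q (u x)) /\
    (forall x y, P x -> P y -> u x = u y -> x = y).

Lemma equipotent_of_bij (P Q : X -> Prop) (h : X -> X) :
  (forall x, P x -> Q (h x)) -> (forall x y, P x -> P y -> h x = h y -> x = y) ->
  (forall y, Q y -> exists x, P x /\ h x = y) -> equipotent P Q.
Proof.
  intros hPQ h_inj h_onto.
  exists (fun p => exist Q (h (proj1_sig p)) (hPQ _ (proj2_sig p))).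
  exists (fun q => exist P (preim P h (proj1_sig q))
                     (proj1 (preim_spec P h _ (h_onto _ (proj2_sig q))))).
  split; [intros [x Px] | intros [y Qy]];
    apply eq_sig_hprop; try (intros; apply proof_irrelevance); simpl.
  - assert (E : exists x', P x' /\ h x' = h x) by eauto.
    destruct (preim_spec P h _ E) as [P' E']. auto.
  - exact (proj2 (preim_spec P h _ (h_onto _ Qy))).
Qed.

Lemma bij_of_equipotent (P Q : X -> Prop) : equipotent P Q -> exists h : X -> X,
  (forall x, P x -> Q (h x)) /\ (forall x y, P x -> P y -> h x = h y -> x = y) /\
  (forall y, Q y -> exists x, P x /\ h x = y).
Proof.
  intros [u [v [vu uv]]].
  set (h x := match excluded_middle_informative (P x) with
              | left Px => proj1_sig (u (exist P x Px))
              | right _ => x end).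
  assert (hE : forall x (Px : P x), h x = proj1_sig (u (exist P x Px))).
  { intros x Px; unfold h; destruct (excluded_middle_informative (P x)) as [Px'|]; [|contradiction].
    do 3 f_equal; apply proof_irrelevance. }
  exists h; split; [|split].
  - intros x Px; rewrite (hE x Px); apply proj2_sig.
  - intros x y Px Py; rewrite (hE x Px), (hE y Py); intros E.
    apply eq_sig_hprop in E; [|intros; apply proof_irrelevance].
    apply (f_equal v) in E; rewrite !vu in E.
    exact (f_equal (@proj1_sig _ _) E).
  - intros y Qy; destruct (v (exist Q y Qy)) as [x Px] eqn:Ev.
    exists x; split; auto; rewrite (hE x Px).
    transitivity (proj1_sig (u (v (exist Q y Qy)))); [now rewrite Ev | now rewrite uv].
Qed.

Lemma le_card_of_equipotent (P Q : X -> Prop) : equipotent P Q -> le_card P Q.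
Proof. intros E; destruct (bij_of_equipotent _ _ E) as [h [hPQ [h_inj _]]]; exists h; auto. Qed.

Lemma equipotent_sym (P Q : X -> Prop) : equipotent P Q -> equipotent Q P.
Proof. intros [u [v [vu uv]]]; exists v, u; auto. Qed.

Lemma equipotent_trans (P Q R : X -> Prop) :
  equipotent P Q -> equipotent Q R -> equipotent P R.
Proof.
  intros [u [v [vu uv]]] [u' [v' [vu' uv']]].
  exists (fun p => u' (u p)), (fun r => v (v' r)); split; intros.
  - rewrite vu'; auto.
  - rewrite uv; auto.
Qed.

Lemma equipotent_of_same_set (P Q : X -> Prop) : same_set P Q -> equipotent P Q.
Proof.
  intros PQ; apply (equipotent_of_bij _ _ (fun x => x)); auto.
  - intros x; apply PQ.
  - intros y Qy; exists y; split; auto; apply PQ; auto.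
Qed.

Lemma le_card_trans (P Q R : X -> Prop) : le_card P Q -> le_card Q R -> le_card P R.
Proof. intros [u [uPQ u_inj]] [u' [uQR u_inj']]; exists (fun x => u' (u x)); split; auto. Qed.

Lemma le_card_of_incl (P Q : X -> Prop) : (forall x, P x -> Q x) -> le_card P Q.
Proof. intros PQ; exists (fun x => x); auto. Qed.

Section SchroederBernstein.
Variables (P Q : X -> Prop) (u v : X -> X).
Hypotheses (uPQ : forall x, P x -> Q (u x))
           (u_inj : forall x y, P x -> P y -> u x = u y -> x = y)
           (vQP : forall y, Q y -> P (v y))
           (v_inj : forall x y, Q x -> Q y -> v x = v y -> x = y).

Let step (x : X) : X := v (u x).

(* The points reached by iterating [step] from a point of P outside v(Q); on them the
   bijection is u, elsewhere it is the inverse of v. *)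
Let C (x : X) : Prop :=
  exists n y, P y /\ ~ (exists q, Q q /\ v q = y) /\ x = Nat.iter n step y.

Let w (x : X) : X :=
  if excluded_middle_informative (C x) then u x else preim Q v x.

Lemma sb_C_P x : C x -> P x.
Proof.
  intros [n [y [Py [_ ->]]]]; induction n as [|n IH]; [exact Py|].
  apply vQP, uPQ, IH.
Qed.

Lemma sb_notC_preim x : P x -> ~ C x -> Q (preim Q v x) /\ v (preim Q v x) = x.
Proof.
  intros Px nC; apply preim_spec, NNPP; intros nE.
  apply nC; exists 0, x; auto.
Qed.

Lemma sb_maps x : P x -> Q (w x).
Proof.
  intros Px; unfold w; destruct (excluded_middle_informative (C x)); auto.
  apply sb_notC_preim; auto.
Qed.

Lemma sb_inj x x' : P x -> P x' -> w x = w x' -> x = x'.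
Proof.
  assert (cross : forall x x', P x' -> C x -> ~ C x' -> u x <> preim Q v x').
  { intros y y' Py' Cy nCy' E; apply nCy'.
    rewrite <- (proj2 (sb_notC_preim y' Py' nCy')), <- E.
    destruct Cy as [n [y0 [Py0 [Hy0 ->]]]]; exists (S n), y0; auto. }
  intros Px Px'; unfold w.
  destruct (excluded_middle_informative (C x)) as [Cx|nCx],
           (excluded_middle_informative (C x')) as [Cx'|nCx']; intros E.
  - apply u_inj; auto using sb_C_P.
  - exfalso; apply (cross x x'); auto.
  - exfalso; apply (cross x' x); auto.
  - rewrite <- (proj2 (sb_notC_preim x Px nCx)), <- (proj2 (sb_notC_preim x' Px' nCx')), E.
    reflexivity.
Qed.

Lemma sb_onto q : Q q -> exists x, P x /\ w x = q.
Proof.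
  intros Qq; destruct (excluded_middle_informative (C (v q))) as [Cv|nCv].
  - destruct Cv as [[|m] [y [Py [Hy E]]]]; [exfalso; apply Hy; eauto|].
    set (t := Nat.iter m step y) in E.
    assert (Ct : C t) by (exists m, y; auto).
    exists t; split; [apply sb_C_P; auto|].
    unfold w; destruct (excluded_middle_informative (C t)); [|contradiction].
    symmetry; apply v_inj; auto using sb_C_P.
  - exists (v q); split; auto.
    unfold w; destruct (excluded_middle_informative (C (v q))); [contradiction|].
    destruct (preim_spec Q v (v q)) as [Q' E]; eauto.
Qed.

Lemma sb_equipotent : equipotent P Q.
Proof. exact (equipotent_of_bij _ _ _ sb_maps sb_inj sb_onto). Qed.

End SchroederBernstein.

Lemma schroeder_bernstein (P Q : X -> Prop) : le_card P Q -> le_card Q P -> equipotent P Q.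
Proof. intros [u [uPQ u_inj]] [v [vQP v_inj]]; exact (sb_equipotent P Q u v uPQ u_inj vQP v_inj). Qed.

Lemma incl_of_finite_le_card (P Q : X -> Prop) (l : list X) :
  (forall x, P x -> Q x) -> (forall x, Q x -> In x l) -> le_card Q P ->
  forall x, Q x -> P x.
Proof.
  intros PQ Ql [u [uQP u_inj]].
  set (lq := nodup (fun x y => excluded_middle_informative (x = y))
                   (filter (fun x => if excluded_middle_informative (Q x) then true else false) l)).
  assert (lqQ : forall x, In x lq <-> Q x).
  { intros x; unfold lq; rewrite nodup_In, filter_In.
    destruct (excluded_middle_informative (Q x)); intuition; discriminate. }
  assert (lq_nodup : NoDup lq) by apply NoDup_nodup.
  assert (ulq_nodup : NoDup (map u lq)).
  { apply NoDup_map_NoDup_ForallPairs; auto.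
    intros a b Ha Hb; apply u_inj; apply lqQ; auto. }
  (* u maps lq injectively into itself, hence onto it *)
  assert (lq_sub : incl lq (map u lq)).
  { apply NoDup_length_incl; auto; [rewrite length_map; auto|].
    intros y Hy; apply in_map_iff in Hy; destruct Hy as [a [<- Ha]].
    apply lqQ, PQ, uQP, lqQ, Ha. }
  intros x Qx; apply lqQ, lq_sub, in_map_iff in Qx.
  destruct Qx as [a [<- Ha]]; apply uQP, lqQ, Ha.
Qed.

Lemma injective_seq_of_infinite (A : X -> Prop) : ~ finite_set A ->
  exists a : nat -> X, (forall n, A (a n)) /\ (forall m n, a m = a n -> m = n).
Proof.
  intros nF.
  assert (fresh : forall l : list X, exists x, A x /\ ~ In x l).
  { intros l; apply NNPP; intros H; apply nF; exists l; intros x Ax.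
    apply NNPP; intros nl; apply H; eauto. }
  set (next l := proj1_sig (constructive_indefinite_description _ (fresh l))).
  assert (next_spec : forall l, A (next l) /\ ~ In (next l) l)
    by (intros l; exact (proj2_sig (constructive_indefinite_description _ (fresh l)))).
  set (pref := fix pref n := match n with 0 => nil | S n => next (pref n) :: pref n end).
  assert (pref_in : forall m n, m < n -> In (next (pref m)) (pref n)).
  { intros m n; induction n as [|n IH]; intros mn; [lia|]; simpl.
    destruct (Nat.eq_dec m n) as [->|ne]; [left; auto|right; apply IH; lia]. }
  exists (fun n => next (pref n)); split; [intros n; apply next_spec|].
  intros m n E; destruct (Nat.lt_trichotomy m n) as [lt|[eq|gt]]; auto; exfalso.
  - apply (proj2 (next_spec (pref n))); rewrite <- E; auto.
  - apply (proj2 (next_spec (pref m))); rewrite E; auto.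
Qed.

End Cardinality.

Section GreenRelations.
Context {X : Type} (A : X -> Prop).

Definition ker_incl (f g : X -> X) : Prop := forall x y, f x = f y -> g x = g y.

Lemma imA_incl_im (B : X -> Prop) (f : X -> X) : forall y, imA B f y -> im f y.
Proof. intros y [x [_ ->]]; exists x; reflexivity. Qed.

Lemma im_incl_A (f : X -> X) : inT A f -> forall y, im f y -> A y.
Proof. intros Tf y [x ->]; apply Tf. Qed.

Lemma saturates_of_same_ker (f g : X -> X) : same_ker f g -> saturates A f -> saturates A g.
Proof. intros K S x; destruct (S x) as [a [Aa E]]; exists a; split; auto; apply K; auto. Qed.

Lemma le_card_imA_of_ker_incl (B : X -> Prop) (f g : X -> X) :
  ker_incl g f -> le_card (imA B f) (imA B g).
Proof.
  intros K; exists (fun y => g (preim B f y)); split.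
  - intros y [x [Bx ->]]; exists (preim B f (f x)); split; auto.
    apply preim_spec; eauto.
  - intros y y' [x [Bx ->]] [x' [Bx' ->]] E.
    destruct (preim_spec B f (f x)) as [_ Ex]; [eauto|].
    destruct (preim_spec B f (f x')) as [_ Ex']; [eauto|].
    rewrite <- Ex, <- Ex'; apply K, E.
Qed.

Lemma le_card_im_of_ker_incl (f g : X -> X) : ker_incl g f -> le_card (im f) (im g).
Proof.
  intros K.
  apply le_card_trans with (imA (fun _ => True) f).
  { apply le_card_of_incl; intros y [x ->]; exists x; auto. }
  apply le_card_trans with (imA (fun _ => True) g).
  - apply le_card_imA_of_ker_incl, K.
  - apply le_card_of_incl, imA_incl_im.
Qed.

Lemma equipotent_im_of_same_ker (f g : X -> X) : same_ker f g -> equipotent (im f) (im g).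
Proof.
  intros K; apply schroeder_bernstein; apply le_card_im_of_ker_incl; intros x y; apply K.
Qed.

Lemma leL_of_im_incl (f g : X -> X) :
  (forall x, exists a, A a /\ g a = f x) -> exists h, inT A h /\ f = mul h g.
Proof.
  intros H; exists (fun x => preim A g (f x)); split.
  - intros x; apply preim_spec, H.
  - apply functional_extensionality; intros x; symmetry; apply preim_spec, H.
Qed.

Lemma leR_of_ker_incl (f g : X -> X) : inT A f -> ker_incl g f ->
  exists h, inT A h /\ f = mul g h.
Proof.
  intros Tf K; exists (fun y => f (preim (fun _ => True) g y)); split.
  - intros y; apply Tf.
  - apply functional_extensionality; intros x; symmetry; apply K, preim_true.
Qed.

Lemma GreenL_iff (f g : X -> X) :
  GreenL A f g <-> f = g \/ (same_set (im f) (im g) /\ saturates A f /\ saturates A g).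
Proof.
  split.
  - intros [[E|[h [Th Ef]]] [E'|[k [Tk Eg]]]]; auto.
    pose proof (equal_f Ef) as Efx; pose proof (equal_f Eg) as Egx; unfold mul in Efx, Egx.
    right; split; [|split].
    + intros y; split; intros [x ->]; [exists (h x)|exists (k x)]; auto.
    + intros x; exists (k (h x)); rewrite <- Egx; auto.
    + intros x; exists (h (k x)); rewrite <- Efx; auto.
  - intros [->|[S [Sf Sg]]]; [split; left; auto|].
    split; right; apply leL_of_im_incl; intros x.
    + destruct (proj1 (S (f x)) (ex_intro _ x eq_refl)) as [y Ey].
      destruct (Sg y) as [a [Aa E]]; exists a; split; congruence.
    + destruct (proj2 (S (g x)) (ex_intro _ x eq_refl)) as [y Ey].
      destruct (Sf y) as [a [Aa E]]; exists a; split; congruence.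
Qed.

Lemma GreenR_iff (f g : X -> X) : inT A f -> inT A g -> (GreenR A f g <-> same_ker f g).
Proof.
  intros Tf Tg; split.
  - intros [[Ef|[h [Th Ef]]] [Eg|[k [Tk Eg]]]]; 
      try (subst g; intros x y; tauto); try (subst f; intros x y; tauto).
    + pose proof (equal_f Ef) as Efx; pose proof (equal_f Eg) as Egx; unfold mul in Efx, Egx.
      intros x y; rewrite Efx, (Efx y), Egx, (Egx y); split; intros E; congruence.
  - intros K; split; right; apply leR_of_ker_incl; auto; intros x y; apply K.
Qed.

Lemma GreenH_iff (f g : X -> X) : inT A f -> inT A g ->
  (GreenH A f g <-> f = g \/ (same_set (im f) (im g) /\ same_ker f g /\ saturates A f)).
Proof.
  intros Tf Tg; unfold GreenH; rewrite GreenL_iff, GreenR_iff by auto; split.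
  - intros [[E|[S [Sf Sg]]] K]; auto.
  - intros [->|[S [K Sf]]].
    + split; auto; intros x y; tauto.
    + split; auto; right; split; [exact S|split; [exact Sf|]].
      apply (saturates_of_same_ker f); auto.
Qed.

Lemma GreenD_iff (f g : X -> X) : inT A f -> inT A g ->
  (GreenD A f g <->
     same_ker f g \/ (equipotent (im f) (im g) /\ saturates A f /\ saturates A g)).
Proof.
  intros Tf Tg; split.
  - intros [h [Th [Lfh Rhg]]]; apply GreenL_iff in Lfh; apply GreenR_iff in Rhg; auto.
    destruct Lfh as [->|[S [Sf Sh]]]; auto.
    right; repeat split; auto.
    + apply equipotent_trans with (im h);
        [apply equipotent_of_same_set, S | apply equipotent_im_of_same_ker, Rhg].
    + apply (saturates_of_same_ker h); auto.
  - intros [K|[E [Sf Sg]]].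
    { exists f; split; auto; split; [split; left; auto|apply GreenR_iff; auto]. }
    (* compose g with a bijection of im g onto im f *)
    destruct (bij_of_equipotent _ _ (equipotent_sym _ _ E)) as [e [e_maps [e_inj e_onto]]].
    assert (K : same_ker (fun x => e (g x)) g).
    { intros x y; split; [|congruence]; apply e_inj; eexists; eauto. }
    exists (fun x => e (g x)); split; [|split].
    + intros x; apply (im_incl_A f Tf), e_maps; eexists; eauto.
    + apply GreenL_iff; right; split; [intros y; split|split; [exact Sf|]].
      * intros [x Ex]; destruct (e_onto y) as [w [[x' ->] Ew]]; [exists x; auto|].
        exists x'; congruence.
      * intros [x ->]; apply e_maps; eexists; eauto.
      * apply (saturates_of_same_ker g); auto; intros x y; symmetry; apply K.
    + apply GreenR_iff; auto; intros x; apply (im_incl_A f Tf), e_maps; eexists; eauto.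
Qed.


Lemma leJ_of_le_card (f g : X -> X) : inT A f -> le_card (im f) (imA A g) -> leJ A f g.
Proof.
  intros Tf [u [u_maps u_inj]]; right; right; right.
  assert (u_fx : forall x, exists a, A a /\ g a = u (f x))
    by (intros x; destruct (u_maps (f x)) as [a [Aa E]]; [exists x; auto|eauto]).
  (* h picks a point of A over u (f x); k undoes u on im f *)
  exists (fun x => preim A g (u (f x))),
         (fun y => f (preim (fun _ => True) (fun x => u (f x)) y)).
  split; [intros x; apply preim_spec, u_fx|split; [intros y; apply Tf|]].
  apply functional_extensionality; intros x; unfold mul.
  rewrite (proj2 (preim_spec A g _ (u_fx x))).
  apply u_inj; [eexists; eauto|eexists; eauto|].
  symmetry; apply (preim_true (fun x => u (f x))).
Qed.

Lemma leJ_iff (f g : X -> X) : inT A f -> inT A g ->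
  (leJ A f g <-> ker_incl g f \/ le_card (im f) (imA A g)).
Proof.
  intros Tf Tg; split.
  - intros [->|[[h [Th ->]]|[[h [Th ->]]|[h [k [Th [Tk ->]]]]]]].
    + left; intros x y; auto.
    + right; apply le_card_of_incl; intros y [x ->]; exists (h x); auto.
    + left; intros x y E; unfold mul; rewrite E; reflexivity.
    + right; apply le_card_trans with (im (fun x => g (h x))).
      * apply le_card_im_of_ker_incl; intros x y E; unfold mul; rewrite E; reflexivity.
      * apply le_card_of_incl; intros y [x ->]; exists (h x); auto.
  - intros [K|C].
    + right; right; left; apply leR_of_ker_incl; auto.
    + apply leJ_of_le_card; auto.
Qed.

Lemma le_card_im_imA_of_ker_incl (f g : X -> X) :
  ker_incl g f -> le_card (im g) (imA A f) -> le_card (im f) (imA A g).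
Proof.
  intros K C.
  apply le_card_trans with (im g); [apply le_card_im_of_ker_incl, K|].
  apply le_card_trans with (imA A f); [exact C|apply le_card_imA_of_ker_incl, K].
Qed.

Lemma equipotent_chain_iff (f g : X -> X) :
  (equipotent (imA A f) (im f) /\ equipotent (im f) (im g) /\ equipotent (im g) (imA A g))
  <-> le_card (im f) (imA A g) /\ le_card (im g) (imA A f).
Proof.
  pose proof (le_card_of_incl _ _ (imA_incl_im A f)) as Af_f.
  pose proof (le_card_of_incl _ _ (imA_incl_im A g)) as Ag_g.
  split.
  - intros [E1 [E2 E3]]; split.
    + apply le_card_trans with (im g); apply le_card_of_equipotent; auto.
    + apply le_card_trans with (im f); apply le_card_of_equipotent, equipotent_sym; auto.
  - intros [Cf Cg].
    assert (f_g : le_card (im f) (im g)) by (apply le_card_trans with (imA A g); auto).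
    assert (g_f : le_card (im g) (im f)) by (apply le_card_trans with (imA A f); auto).
    split; [|split]; apply schroeder_bernstein; auto.
    + apply le_card_trans with (im g); auto.
    + apply le_card_trans with (im f); auto.
Qed.

Lemma GreenJ_iff (f g : X -> X) : inT A f -> inT A g ->
  (GreenJ A f g <-> same_ker f g \/
     (equipotent (imA A f) (im f) /\ equipotent (im f) (im g) /\ equipotent (im g) (imA A g))).
Proof.
  intros Tf Tg; unfold GreenJ; rewrite leJ_iff, leJ_iff, equipotent_chain_iff by auto.
  split.
  - intros [[K1|C1] [K2|C2]].
    + left; intros x y; split; auto.
    + right; split; auto; apply le_card_im_imA_of_ker_incl; auto.
    + right; split; auto; apply le_card_im_imA_of_ker_incl; auto.
    + right; auto.
  - intros [K|[C1 C2]]; [split; left; intros x y; apply K|auto].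
Qed.

End GreenRelations.

Section GreenD_GreenJ.
Context {X : Type} (A : X -> Prop).

Lemma equipotent_imA_im_of_saturates (h : X -> X) :
  saturates A h -> equipotent (imA A h) (im h).
Proof.
  intros S; apply equipotent_of_same_set; intros y; split; [apply imA_incl_im|].
  intros [x ->]; destruct (S x) as [a [Aa E]]; exists a; auto.
Qed.

Lemma saturates_of_equipotent_imA (h : X -> X) :
  finite_set A \/ (forall x, A x) ->
  inT A h -> equipotent (imA A h) (im h) -> saturates A h.
Proof.
  intros HA Th E x.
  assert (im_imA : forall y, im h y -> imA A h y).
  { destruct HA as [[l Al]|A_full].
    - apply (incl_of_finite_le_card _ _ l (imA_incl_im A h)).
      + intros y Hy; apply Al, (im_incl_A A h Th), Hy.
      + apply le_card_of_equipotent, equipotent_sym, E.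
    - intros y [w ->]; exists w; auto. }
  destruct (im_imA (h x)) as [a [Aa E']]; [exists x; auto|exists a; auto].
Qed.

Lemma GreenD_iff_GreenJ (f g : X -> X) :
  finite_set A \/ (forall x, A x) ->
  inT A f -> inT A g -> (GreenD A f g <-> GreenJ A f g).
Proof.
  intros HA Tf Tg; rewrite GreenD_iff, GreenJ_iff by auto; split.
  - intros [K|[E [Sf Sg]]]; [left; auto|right].
    split; [apply equipotent_imA_im_of_saturates; auto|split; auto].
    apply equipotent_sym, equipotent_imA_im_of_saturates; auto.
  - intros [K|[E1 [E2 E3]]]; [left; auto|right].
    split; auto; split; apply saturates_of_equipotent_imA; auto.
    apply equipotent_sym; auto.
Qed.

Section Counterexample.
Variables (a : nat -> X) (z : X).
Hypotheses (Aa : forall n, A (a n)) (a_inj : forall m n, a m = a n -> m = n) (nAz : ~ A z).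

(* The index is unspecified off the range of a; the argument never needs its value there. *)
Definition seq_index (y : X) : nat := epsilon (inhabits 0) (fun i => a i = y).

Definition shift (y : X) : X := a (S (seq_index y)).

Definition shift_but_z (y : X) : X :=
  if excluded_middle_informative (y = z) then a 0 else shift y.

Lemma seq_index_a i : seq_index (a i) = i.
Proof. apply a_inj, (epsilon_spec (inhabits 0) (fun j => a j = a i)); eauto. Qed.

Lemma shift_a i : shift (a i) = a (S i).
Proof. unfold shift; rewrite seq_index_a; reflexivity. Qed.

Lemma inT_shift : inT A shift.
Proof. intros y; apply Aa. Qed.

Lemma inT_shift_but_z : inT A shift_but_z.
Proof.
  intros y; unfold shift_but_z; destruct (excluded_middle_informative (y = z));
    [apply Aa|apply inT_shift].
Qed.

Lemma shift_but_z_z : shift_but_z z = a 0.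
Proof. unfold shift_but_z; destruct (excluded_middle_informative (z = z)); congruence. Qed.

Lemma shift_but_z_in_range y : exists k, shift_but_z y = a k.
Proof.
  unfold shift_but_z; destruct (excluded_middle_informative (y = z));
    [exists 0|exists (S (seq_index y))]; reflexivity.
Qed.

Lemma shift_but_z_eq_a0 y : shift_but_z y = a 0 -> y = z.
Proof.
  unfold shift_but_z, shift; destruct (excluded_middle_informative (y = z)); auto.
  intros E; apply a_inj in E; discriminate.
Qed.

Lemma shift_but_z_neq (y : X) : y <> z -> shift_but_z y = shift y.
Proof. unfold shift_but_z; destruct (excluded_middle_informative (y = z)); tauto. Qed.

Lemma GreenJ_shift_but_z : GreenJ A shift_but_z shift.
Proof.
  split; apply leJ_iff; auto using inT_shift, inT_shift_but_z.
  - (* shift is injective on the range of a, which contains im shift_but_z *)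
    right; exists shift; split.
    + intros y [x ->]; exists (a (seq_index (shift_but_z x))); split; auto.
      rewrite shift_a; reflexivity.
    + intros y y' [x ->] [x' ->].
      destruct (shift_but_z_in_range x) as [k ->], (shift_but_z_in_range x') as [k' ->].
      rewrite !shift_a; intros E; apply a_inj in E; congruence.
  - left; intros x y E.
    destruct (excluded_middle_informative (x = z)) as [->|nx].
    + rewrite shift_but_z_z in E; symmetry in E.
      apply shift_but_z_eq_a0 in E; subst; reflexivity.
    + destruct (excluded_middle_informative (y = z)) as [->|ny].
      * rewrite shift_but_z_z in E; apply shift_but_z_eq_a0 in E; subst; reflexivity.
      * rewrite <- (shift_but_z_neq x), <- (shift_but_z_neq y); auto.
Qed.

Lemma not_GreenD_shift_but_z : ~ GreenD A shift_but_z shift.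
Proof.
  rewrite GreenD_iff by auto using inT_shift, inT_shift_but_z.
  intros [K|[_ [S _]]].
  - set (w := a (seq_index z)).
    assert (wz : w <> z) by (intros E; apply nAz; rewrite <- E; apply Aa).
    assert (E : shift z = shift w) by (unfold w; rewrite shift_a; reflexivity).
    apply K in E; rewrite shift_but_z_z in E.
    apply wz, shift_but_z_eq_a0; auto.
  - destruct (S z) as [b [Ab E]]; rewrite shift_but_z_z in E.
    apply shift_but_z_eq_a0 in E; subst; contradiction.
Qed.

End Counterexample.

Lemma exists_GreenJ_not_GreenD :
  ~ finite_set A -> ~ (forall x, A x) ->
  exists f g, inT A f /\ inT A g /\ GreenJ A f g /\ ~ GreenD A f g.
Proof.
  intros nF nT; apply not_all_ex_not in nT; destruct nT as [z nAz].
  destruct (injective_seq_of_infinite A nF) as [a [Aa a_inj]].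
  exists (shift_but_z a z), (shift a); split; [|split; [|split]].
  - apply inT_shift_but_z; auto.
  - apply inT_shift; auto.
  - apply GreenJ_shift_but_z; auto.
  - apply not_GreenD_shift_but_z; auto.
Qed.

End GreenD_GreenJ.

Theorem theorem5p4 (X : Type) (A : X -> Prop) (hA : exists a, A a) :
  (forall f g : X -> X, inT A f -> inT A g ->
     (GreenL A f g <->
        f = g \/ (same_set (im f) (im g) /\ saturates A f /\ saturates A g))
  /\ (GreenR A f g <-> same_ker f g)
  /\ (GreenH A f g <->
        f = g \/ (same_set (im f) (im g) /\ same_ker f g /\ saturates A f))
  /\ (GreenD A f g <->
        same_ker f g \/
        (equipotent (im f) (im g) /\ saturates A f /\ saturates A g))
  /\ (GreenJ A f g <->
        same_ker f g \/
        (equipotent (imA A f) (im f) /\ equipotent (im f) (im g)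
         /\ equipotent (im g) (imA A g))))
  /\
  ((forall f g : X -> X, inT A f -> inT A g -> (GreenD A f g <-> GreenJ A f g))
   <-> (finite_set A \/ forall x : X, A x)).
Proof.
  split.
  - intros f g Tf Tg.
    split; [apply GreenL_iff|split; [apply GreenR_iff; auto|]].
    split; [apply GreenH_iff; auto|split; [apply GreenD_iff; auto|apply GreenJ_iff; auto]].
  - split; [|intros HA f g; apply GreenD_iff_GreenJ, HA].
    intros DJ; apply NNPP; intros HA; apply not_or_and in HA; destruct HA as [nF nT].
    destruct (exists_GreenJ_not_GreenD A nF nT) as [f [g [Tf [Tg [J nD]]]]].
    apply nD, DJ; auto.
Qed.
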